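(* Let $G=(V,E,L)$ be a complete graph with loops, $n:=|V|$, whose set of plus loops is $L^+=\{\{j,j\}\}$ for some $j\in V$ (minus loops $L^-$ arbitrary). Introduce auxiliary variables $z_S$ for all $S\subseteq V$ with $|S|\ge3$. Then $\mathrm{QP}(G)$ equals the projection onto the coordinates $V\cup E\cup L$ of the set of all vectors satisfying $$z_{jj}\ \ge\sum_{J\subseteq V:\, j\in J}\frac{\big(\ell_n(J,V\setminus J)\big)^2}{\ell_{n-1}(J\setminus\{j\},V\setminus J)},\qquad \ell_n(J,V\setminus J)\ge0\ \ \forall J\subseteq V,$$ $$z_{ii}\le z_i,\quad z_i\in[0,1]\qquad\forall\{i,i\}\in L^-.$$
   Context: A graph with loops is $G=(V,E,L)$: $V$ finite node set, $E$ a set of unordered pairs of distinct nodes, $L$ a set of loops $\{i,i\}$ partitioned as $L=L^-\cup L^+$ (minus/plus loops); it is complete if $E$ contains all pairs of distinct nodes. $\mathrm{QP}(G):=\mathrm{conv}\{z\in\mathbb{R}^{V\cup E\cup L}: z_{ii}\ge z_i^2\ \forall\{i,i\}\in L^+,\ z_{ii}\le z_i^2\ \forall \{i,i\}\in L^-,\ z_{ij}=z_iz_j\ \forall \{i,j\}\in E,\ z_i\in[0,1]\ \forall i\in V\}$. For $S\subseteq V$: $z_\emptyset:=1$, $z_{\{k\}}:=z_k$, $z_{\{k,l\}}$ the edge variable, and $z_S$ auxiliary for $|S|\ge3$ (loop variables $z_{ii}$ are distinct). For disjoint $J_1,J_2$ with $|J_1\cup J_2|=d$, $\ell_d(J_1,J_2):=\sum_{t\subseteq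 J_2}(-1)^{|t|}z_{J_1\cup t}$. Each $u^2/v$ denotes the closed perspective: $u^2/v$ if $v>0$, $0$ if $u=v=0$, $+\infty$ if $u\ne0,v=0$. *)

From HB Require Import structures.
From mathcomp Require Import all_boot all_order all_algebra.
From mathcomp Require Import reals constructive_ereal.
Set Implicit Arguments. Unset Strict Implicit. Unset Printing Implicit Defensive.
Import Order.TTheory GRing.Theory Num.Theory.
Local Open Scope ring_scope.

(* The complete graph has one edge variable for every
   2-element subset of V.
   A coordinate of R^{V ∪ E ∪ L} is either a nonempty set S of size <= 2
   (S = {k} is the node coordinate z_k, S = {k,l} the edge coordinate z_kl)
   or a looped node i (the loop coordinate z_ii). *)
Definition coord_ok (n : nat) (L : {set 'I_n}) (c : {set 'I_n} + 'I_n) : bool :=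
  match c with
  | inl A => (0 < #|A| <= 2)%N
  | inr i => i \in L
  end.

Definition qcoord (n : nat) (L : {set 'I_n}) := {c : {set 'I_n} + 'I_n | coord_ok L c}.

(* Projection onto the coordinates V ∪ E ∪ L of a full vector given by
   set-indexed variables z_S and loop variables y_i = z_ii. *)
Definition proj_pt (R : Type) (n : nat) (L : {set 'I_n})
  (z : {set 'I_n} -> R) (y : 'I_n -> R) : qcoord L -> R :=
  fun c => match val c with inl A => z A | inr i => y i end.

Definition conv_hull (R : numDomainType) (T : Type) (A : (T -> R) -> Prop)
  : (T -> R) -> Prop :=
  fun p => exists (k : nat) (lam : 'I_k -> R) (q : 'I_k -> T -> R),
    (forall i, 0 <= lam i) /\ \sum_(i < k) lam i = 1 /\
    (forall i, A (q i)) /\ (forall c, p c = \sum_(i < k) lam i * q i c).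

(* Generating points: z_i = x_i in [0,1],
   z_kl = x_k x_l (= product over the pair), loop constraints. *)
Definition QP (R : realDomainType) (n : nat) (Lp Lm : {set 'I_n})
  : (qcoord (Lp :|: Lm) -> R) -> Prop :=
  conv_hull (fun p => exists (x : 'I_n -> R) (y : 'I_n -> R),
    (forall i, 0 <= x i <= 1) /\
    (forall i, i \in Lp -> y i >= x i ^+ 2) /\
    (forall i, i \in Lm -> y i <= x i ^+ 2) /\
    p = proj_pt (fun A => \prod_(k in A) x k) y).

(* ell_d(J1, J2) = sum_{t ⊆ J2} (-1)^{|t|} z_{J1 ∪ t}  (d = |J1 ∪ J2|). *)
Definition ell (R : ringType) (n : nat) (z : {set 'I_n} -> R) (J1 J2 : {set 'I_n}) : R :=
  \sum_(t : {set 'I_n} | t \subset J2) (-1) ^+ #|t| * z (J1 :|: t).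

Definition persp (R : realFieldType) (u v : R) : \bar R :=
  if 0 < v then (u ^+ 2 / v)%:E
  else if (u == 0) && (v == 0) then 0%E else +oo%E.

Definition ext_proj (R : realFieldType) (n : nat) (j : 'I_n) (Lm : {set 'I_n})
  : (qcoord ([set j] :|: Lm) -> R) -> Prop :=
  fun p => exists (z : {set 'I_n} -> R) (y : 'I_n -> R),
    z set0 = 1 /\
    ((y j)%:E >= \sum_(J : {set 'I_n} | j \in J) persp (ell z J (~: J)) (ell z (J :\ j) (~: J)))%E /\
    (forall J : {set 'I_n}, 0 <= ell z J (~: J)) /\
    (forall i, i \in Lm -> y i <= z [set i] /\ 0 <= z [set i] <= 1) /\
    p = proj_pt z y.

Arguments QP {R n} Lp Lm _.
Arguments ext_proj {R n} j Lm _.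

(* The numbers mu_J = ell_n(J, V \ J) are the Moebius inverse of z on the
   lattice of subsets, z_S = sum_{J ⊇ S} mu_J, and
   ell_{n-1}(J \ j, V \ J) = mu_J + mu_{J \ j} =: nu_J for j in J.

   QP(G) ⊆ extension: at a point z_S = prod_{s in S} x_s the mu_J form the
   product distribution prod_J x * prod_{V \ J} (1 - x), so mu_J = x_j nu_J and
   sum_{J ∋ j} nu_J = 1.  As ell is linear in z, the Cauchy-Schwarz bound
   persp(sum w a, sum w) <= sum w a^2 applied for each J ∋ j bounds the
   perspective sum of a convex combination by sum lam x_j^2 <= z_jj.

   Extension ⊆ QP(G): z is the mixture with weights mu_J of the points that are
   the indicator of J off j and take the value mu_K / nu_K at j, where
   K = J ∪ {j}.  The perspective inequality says that the squares of these
   values average to at most z_jj; the slack in z_jj and in z_ii <= z_i is put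
   on the loop coordinates, which is harmless for the minus loops since the
   points are 0/1 off j. *)

From HB Require Import structures.
From mathcomp Require Import all_boot all_order all_algebra.
From mathcomp Require Import reals constructive_ereal.
From mathcomp Require Import ring lra.
From Stdlib Require Import FunctionalExtensionality.
Set Implicit Arguments.
Unset Strict Implicit.
Unset Printing Implicit Defensive.
Import Order.TTheory GRing.Theory Num.Theory.
Local Open Scope ring_scope.

Definition mixture (R : pzSemiRingType) (I : finType) (T : Type)
  (lam : I -> R) (w : I -> T -> R) : T -> R :=
  fun c => \sum_i lam i * w i c.

Lemma conv_hull_mixture (R : numDomainType) (T : Type) (A : (T -> R) -> Prop)
    (I : finType) (lam : I -> R) (q : I -> T -> R) (p : T -> R) :
  (forall i, 0 <= lam i) -> \sum_i lam i = 1 -> (forall i, A (q i)) ->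
  (forall c, p c = mixture lam q c) -> conv_hull A p.
Proof.
move=> lam_ge0 lam_sum1 Aq pE.
exists #|I|, (lam \o enum_val), (q \o enum_val); split=> //=.
split; first by rewrite -lam_sum1 (big_enum_val lam).
by split=> // c; rewrite pE /mixture (big_enum_val (fun i => lam i * q i c)).
Qed.

Lemma proj_pt_mixture (R : pzSemiRingType) (I : finType) n (L : {set 'I_n})
    (lam : I -> R) (z : I -> {set 'I_n} -> R) (y : I -> 'I_n -> R) (c : qcoord L) :
  mixture lam (fun i => proj_pt (z i) (y i)) c = proj_pt (mixture lam z) (mixture lam y) c.
Proof. by rewrite /mixture /proj_pt; case: (val c). Qed.

Lemma prod1D_sum_subsets (R : comPzSemiRingType) (I : finType) (A : {set I}) (a : I -> R) :
  \prod_(i in A) (1 + a i) = \sum_(t : {set I} | t \subset A) \prod_(i in t) a i.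
Proof.
rewrite big_mkcond /=.
have -> : \prod_i (if i \in A then 1 + a i else 1) =
          \prod_i ((if i \in A then a i else 0) + 1).
  by apply: eq_bigr => i _; case: ifP; rewrite ?add0r // addrC.
rewrite (bigA_distr 1 +%R) [RHS]big_mkcond /=; apply: eq_bigr => t _.
case: ifP => [tA | /negbT/subsetPn[i it iA]].
  rewrite [RHS]big_mkcond; apply: eq_bigr => i _; case: ifP => // it.
  by rewrite (subsetP tA i it).
by rewrite (bigD1 i) //= it (negbTE iA) mul0r.
Qed.

Section SubsetSums.
Variables (R : comNzRingType) (n : nat).
Implicit Types (A J K S U t : {set 'I_n}) (j k : 'I_n).
Implicit Types (z : {set 'I_n} -> R) (x : 'I_n -> R).

Definition prod_pt x S : R := \prod_(s in S) x s.

Lemma ell_prod_pt x J1 J2 : [disjoint J1 & J2] ->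
  ell (prod_pt x) J1 J2 = \prod_(i in J1) x i * \prod_(i in J2) (1 - x i).
Proof.
move=> dJ; rewrite /ell (prod1D_sum_subsets J2 (fun i => - x i)) mulr_sumr.
apply: eq_bigr => t tJ2; rewrite prodrN /prod_pt mulrCA -bigU; last exact: disjointWr dJ.
by congr (_ * _); apply: eq_bigl => i; rewrite !inE.
Qed.

Lemma ell_prod_pt_setD1 x J j : j \in J ->
  ell (prod_pt x) J (~: J) = x j * ell (prod_pt x) (J :\ j) (~: J).
Proof.
move=> jJ; rewrite !ell_prod_pt ?disjoints_subset ?setCK ?subD1set //.
by rewrite (big_setD1 j jJ) mulrA.
Qed.

Lemma prod_pt_indicator J A : prod_pt (fun s => (s \in J)%:R) A = (A \subset J)%:R.
Proof.
have [AJ | /subsetPn[s sA sJ]] := boolP (A \subset J).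
  by rewrite /prod_pt big1 // => s sA; rewrite (subsetP AJ).
by rewrite /prod_pt (bigD1 s) //= (negbTE sJ) mul0r.
Qed.

Lemma ell_mixture (I : finType) (lam : I -> R) (w : I -> {set 'I_n} -> R) J1 J2 :
  ell (mixture lam w) J1 J2 = \sum_i lam i * ell (w i) J1 J2.
Proof.
rewrite /ell /mixture; under eq_bigr do rewrite mulr_sumr.
rewrite exchange_big /=; apply: eq_bigr => i _; rewrite mulr_sumr.
by apply: eq_bigr => t _; rewrite mulrCA.
Qed.

Lemma sum_mem_setU1 (P : pred {set 'I_n}) (F : {set 'I_n} -> R) k :
  \sum_(K | P K && (k \in K)) F K = \sum_(t | P (k |: t) && (k \notin t)) F (k |: t).
Proof.
rewrite (reindex_onto (fun t => k |: t) (fun K : {set 'I_n} => K :\ k)); last first.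
  by move=> K /andP[_ kK]; rewrite setD1K.
apply: eq_bigl => t; rewrite setU11 andbT; congr (_ && _).
have [kt|kt] := boolP (k \in t); last by rewrite setU1K ?eqxx.
by apply/negbTE/eqP => tE; move: kt; rewrite -tE setD11.
Qed.

Lemma sum_pairs_setD1 (F : {set 'I_n} -> R) k :
  \sum_(J : {set 'I_n}) F J = \sum_(K : {set 'I_n} | k \in K) (F K + F (K :\ k)).
Proof.
rewrite (bigID (fun J => k \in J)) big_split /=; congr (_ + _).
rewrite (sum_mem_setU1 xpredT (fun K => F (K :\ k))) /=.
by apply: eq_bigr => t kt; rewrite setU1K.
Qed.

Lemma ell_setU1r z J1 J2 k : k \notin J2 ->
  ell z J1 (k |: J2) = ell z J1 J2 - ell z (k |: J1) J2.
Proof.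
move=> kJ2; rewrite /ell (bigID (fun t => k \in t)) /= addrC; congr (_ + _).
  by apply: eq_bigl => t; rewrite -subsetD1 setU1K.
rewrite sum_mem_setU1 -sumrN; apply: eq_big => [u | u /andP[_ ku]].
  apply/andP/idP => [[kuJ ku] | uJ2].
    by rewrite -(setU1K kJ2) subsetD1 ku (subset_trans (subsetU1 k u)).
  split; first exact: setUS.
  by apply: contraNN kJ2; apply: (subsetP uJ2).
by rewrite cardsU1 ku exprS mulN1r mulNr setUCA setUA.
Qed.

Lemma ell_setD1 z J j : j \in J ->
  ell z (J :\ j) (~: J) = ell z J (~: J) + ell z (J :\ j) (~: (J :\ j)).
Proof.
move=> jJ; rewrite setCD setUC ell_setU1r ?setD1K ?inE ?negbK //.
by rewrite addrC subrK.
Qed.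

Lemma ell_compl_supsets z J :
  ell z J (~: J) = \sum_(U : {set 'I_n} | J \subset U) (-1) ^+ #|U :\: J| * z U.
Proof.
rewrite /ell (reindex_onto (fun U => U :\: J) (fun t => J :|: t)) /=.
  apply: eq_big => U; last by move=> /andP[_ /eqP ->].
  rewrite subsetDr /=.
  have -> : J :|: (U :\: J) = J :|: U.
    by apply/setP => i; rewrite !inE; case: (i \in J).
  by apply/idP/idP => [/eqP/setUidPr|/setUidPr ->].
move=> t tJ; rewrite setDUl setDv set0U; apply/setDidPl.
by rewrite disjoints_subset.
Qed.

Lemma sum_sign_interval S U :
  \sum_(J : {set 'I_n} | (S \subset J) && (J \subset U)) (-1) ^+ #|U :\: J|
    = (S == U)%:R :> R.
Proof.
(* expanding prod_i (F i + G i) over J picks F i for i in J and G i otherwise;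
   the nonzero terms are exactly those with S ⊆ J ⊆ U, with sign (-1)^|U \ J| *)
pose F i : R := if i \in U then 1 else 0.
pose G i : R := if i \in S then 0 else if i \in U then -1 else 1.
have -> : (S == U)%:R = \prod_i (F i + G i).
  rewrite /F /G; have [<-|SU] := eqVneq S U.
    by rewrite big1 // => i _; case: (i \in S); rewrite ?addr0 ?add0r.
  have : ~~ ((S \subset U) && (U \subset S)) by rewrite -eqEsubset.
  case/nandP => /subsetPn[i h1 h2];
    by rewrite (bigD1 i) //= h1 (negbTE h2) ?addrN ?addr0 mul0r.
rewrite (bigA_distr 1 +%R) big_mkcond; apply: eq_bigr => J _.
case: ifP => [/andP[SJ JU] | /negbT/nandP[] /subsetPn[i h1 h2]].
- rewrite -prodr_const big_mkcond; apply: eq_bigr => i _; rewrite /F /G !inE.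
  case: (boolP (i \in J)) => iJ /=; first by rewrite (subsetP JU _ iJ).
  by case: (boolP (i \in S)) => iS; first by rewrite (subsetP SJ _ iS) in iJ.
- by rewrite (bigD1 i) //= /G h1 (negbTE h2) mul0r.
- by rewrite (bigD1 i) //= /F h1 (negbTE h2) mul0r.
Qed.

Lemma moebius_ell z S : z S = \sum_(J : {set 'I_n} | S \subset J) ell z J (~: J).
Proof.
under eq_bigr do rewrite ell_compl_supsets.
rewrite (exchange_big_dep (fun U => S \subset U)) /=; last first.
  by move=> J U SJ JU; apply: subset_trans SJ JU.
rewrite (bigD1 S) //= -mulr_suml sum_sign_interval eqxx mul1r big1 ?addr0 //.
move=> U /andP[_ US].
by rewrite -mulr_suml sum_sign_interval eq_sym (negbTE US) mul0r.
Qed.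

Lemma sum_ell_compl z : \sum_(J : {set 'I_n}) ell z J (~: J) = z set0.
Proof. by rewrite (moebius_ell z set0); apply: eq_bigl => J; rewrite sub0set. Qed.

Lemma sum_ell_subset z A :
  \sum_(J : {set 'I_n}) ell z J (~: J) * (A \subset J)%:R = z A.
Proof.
rewrite (moebius_ell z A) [RHS]big_mkcond; apply: eq_bigr => J _.
by case: ifP; rewrite ?mulr1 ?mulr0.
Qed.

Lemma sum_ell_setD1 z j :
  \sum_(J : {set 'I_n} | j \in J) ell z (J :\ j) (~: J) = z set0.
Proof.
by rewrite -sum_ell_compl (sum_pairs_setD1 _ j); apply: eq_bigr => K; apply: ell_setD1.
Qed.

Lemma sum_ell_setU1 z j (g : {set 'I_n} -> R) :
  \sum_(J : {set 'I_n}) ell z J (~: J) * g (j |: J) =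
  \sum_(K : {set 'I_n} | j \in K) ell z (K :\ j) (~: K) * g K.
Proof.
rewrite (sum_pairs_setD1 _ j); apply: eq_bigr => K jK.
have -> : j |: K = K by apply/setUidPr; rewrite sub1set.
by rewrite setD1K // ell_setD1 // mulrDl.
Qed.
End SubsetSums.

Lemma persp_sum_le (R : realFieldType) (I : finType) (w a : I -> R) :
  (forall i, 0 <= w i) ->
  (persp (\sum_i w i * a i) (\sum_i w i) <= (\sum_i w i * a i ^+ 2)%:E)%E.
Proof.
move=> w_ge0; set U := \sum_i w i * a i; set V := \sum_i w i.
set Q := \sum_i w i * a i ^+ 2.
rewrite /persp; have [V_gt0 | V_le0] := ltP 0 V.
  pose c := U / V.
  (* expand 0 <= sum_i w_i (a_i - c)^2 around the weighted mean c of a *)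
  have cV : c * V = U by rewrite /c divfK ?gt_eqF.
  have : 0 <= \sum_i w i * (a i - c) ^+ 2.
    by apply: sumr_ge0 => i _; rewrite mulr_ge0 ?sqr_ge0.
  have -> : \sum_i w i * (a i - c) ^+ 2 = Q - c *+ 2 * U + c ^+ 2 * V.
    rewrite /Q /U /V !mulr_sumr -sumrB -big_split /=.
    by apply: eq_bigr => i _; ring.
  have -> : U ^+ 2 / V = c * U by rewrite /c expr2 mulrAC.
  have -> : c ^+ 2 * V = c * U by rewrite expr2 -mulrA cV.
  by rewrite lee_fin; lra.
have V0 : V = 0 by apply/eqP; rewrite eq_le V_le0 sumr_ge0.
have w0 i : w i = 0 by apply: (psumr_eq0P (fun i _ => w_ge0 i) V0).
have -> : U = 0 by rewrite /U big1 // => i _; rewrite w0 mul0r.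
rewrite V0 eqxx /= lee_fin.
by rewrite sumr_ge0 // => i _; rewrite mulr_ge0 ?sqr_ge0.
Qed.

Lemma ell_prod_pt_ge0 (R : realFieldType) n (x : 'I_n -> R) (J1 J2 : {set 'I_n}) :
  (forall s, 0 <= x s <= 1) -> [disjoint J1 & J2] -> 0 <= ell (prod_pt x) J1 J2.
Proof.
move=> x01 dJ; rewrite ell_prod_pt // mulr_ge0 // prodr_ge0 // => s _.
  by case/andP: (x01 s).
by rewrite subr_ge0; case/andP: (x01 s).
Qed.

Section ProductMixtures.
Variables (R : realFieldType) (n : nat) (I : finType).
Variables (lam : I -> R) (x : I -> 'I_n -> R).
Hypotheses (lam_ge0 : forall i, 0 <= lam i) (x01 : forall i s, 0 <= x i s <= 1).
Local Notation z := (mixture lam (fun i => prod_pt (x i))).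

Lemma ell_mixture_ge0 J : 0 <= ell z J (~: J).
Proof.
rewrite ell_mixture sumr_ge0 // => i _.
by rewrite mulr_ge0 ?ell_prod_pt_ge0 // disjoints_subset setCK.
Qed.

Lemma sum_persp_mixture_le j :
  (\sum_(J : {set 'I_n} | j \in J) persp (ell z J (~: J)) (ell z (J :\ j) (~: J))
     <= (\sum_i lam i * x i j ^+ 2)%:E)%E.
Proof.
pose v i J := ell (prod_pt (x i)) (J :\ j) (~: J).
apply: (@le_trans _ _
  (\sum_(J : {set 'I_n} | j \in J) (\sum_i (lam i * v i J) * x i j ^+ 2)%:E)%E).
  apply: lee_sum => J jJ; rewrite !ell_mixture.
  have -> : \sum_i lam i * ell (prod_pt (x i)) J (~: J) = \sum_i (lam i * v i J) * x i j.
    by apply: eq_bigr => i _; rewrite (ell_prod_pt_setD1 _ jJ) [x i j * _]mulrC mulrA.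
  apply: persp_sum_le => i; rewrite mulr_ge0 // ell_prod_pt_ge0 //.
  by rewrite disjoints_subset setCK subD1set.
rewrite sumEFin lee_fin exchange_big /=; apply: ler_sum => i _.
by rewrite -mulr_suml -mulr_sumr sum_ell_setD1 /prod_pt big_set0 mulr1.
Qed.

End ProductMixtures.

Lemma QP_sub_ext_proj (R : realFieldType) n (j : 'I_n) (Lm : {set 'I_n})
    (p : qcoord ([set j] :|: Lm) -> R) :
  QP [set j] Lm p -> ext_proj j Lm p.
Proof.
case=> k [lam [q [lam_ge0 [lam_sum1 [q_gen pq]]]]].
have /fin_all_exists[xy xy_gen] : forall i, exists xy : ('I_n -> R) * ('I_n -> R),
    [/\ forall s, 0 <= xy.1 s <= 1, xy.1 j ^+ 2 <= xy.2 j,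
        forall s, s \in Lm -> xy.2 s <= xy.1 s ^+ 2 &
        q i = proj_pt (prod_pt xy.1) xy.2].
  move=> i; have [x [y [x01 [yLp [yLm ->]]]]] := q_gen i.
  by exists (x, y); split => //=; apply: yLp; apply: set11.
pose x i := (xy i).1; pose y i := (xy i).2.
have x01 i s : 0 <= x i s <= 1 by have [x01i _ _ _] := xy_gen i; apply: x01i.
have z1 s : mixture lam (fun i => prod_pt (x i)) [set s] = \sum_i lam i * x i s.
  by apply: eq_bigr => i _; rewrite /prod_pt big_set1.
exists (mixture lam (fun i => prod_pt (x i))), (mixture lam y).
split; [|split; [|split; [|split]]].
- by rewrite -lam_sum1; apply: eq_bigr => i _; rewrite /prod_pt big_set0 mulr1.
- apply: le_trans (sum_persp_mixture_le lam_ge0 x01 j) _.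
  by rewrite lee_fin; apply: ler_sum => i _; rewrite ler_wpM2l //; case: (xy_gen i).
- exact: ell_mixture_ge0.
- move=> s sLm; rewrite z1; split.
    apply: ler_sum => i _; rewrite ler_wpM2l //; have [_ _ yLm _] := xy_gen i.
    by have := yLm s sLm; have := x01 i s; rewrite /x /y; nra.
  rewrite sumr_ge0 -?lam_sum1 ?ler_sum // => i _;
    by have := x01 i s; have := lam_ge0 i; nra.
- apply: functional_extensionality => c; rewrite pq -proj_pt_mixture.
  by apply: eq_bigr => i _; case: (xy_gen i) => _ _ _ ->.
Qed.

Section ExtendedPoints.
Variables (R : realFieldType) (n : nat) (j : 'I_n) (z : {set 'I_n} -> R).
Implicit Types (A J : {set 'I_n}) (s : 'I_n).
Hypothesis ell_ge0 : forall J, 0 <= ell z J (~: J).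
Local Notation mu J := (ell z J (~: J)).
Local Notation nu J := (ell z (J :\ j) (~: J)).

(* the conditional weight of J given J :\ j; set to 0 where nu J = 0, which
   forces mu J = 0 *)
Definition ell_ratio (J : {set 'I_n}) : R := if 0 < nu J then mu J / nu J else 0.

Lemma mu_le_nu J : j \in J -> mu J <= nu J.
Proof. by move=> jJ; rewrite ell_setD1 // lerDl. Qed.

Lemma ell_ratio_itv J : j \in J -> 0 <= ell_ratio J <= 1.
Proof.
move=> jJ; rewrite /ell_ratio; case: ifP => [nu_gt0 | _]; last by rewrite lexx ler01.
by rewrite divr_ge0 ?ell_ge0 ?(ltW nu_gt0) //= ler_pdivrMr // mul1r mu_le_nu.
Qed.

Lemma nu_mul_ratio J : j \in J -> nu J * ell_ratio J = mu J.
Proof.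
move=> jJ; rewrite /ell_ratio; case: ifP => [nu_gt0 | /negbT nu_le0].
  by rewrite mulrC divfK ?gt_eqF.
by apply/esym/eqP; rewrite mulr0 eq_le ell_ge0 (le_trans (mu_le_nu jJ)) // leNgt.
Qed.

Lemma persp_mu_nu J : j \in J -> persp (mu J) (nu J) = (nu J * ell_ratio J ^+ 2)%:E.
Proof.
move=> jJ; rewrite /persp -(nu_mul_ratio jJ); case: ifP => [nu_gt0 | /negbT nu_le0].
  by congr (_%:E); field; rewrite gt_eqF.
have -> : nu J = 0 by apply/eqP; rewrite eq_le leNgt nu_le0 (le_trans _ (mu_le_nu jJ)).
by rewrite !mul0r eqxx.
Qed.

Lemma sum_persp_mu_nu :
  (\sum_(J : {set 'I_n} | j \in J) persp (mu J) (nu J) =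
   (\sum_(J : {set 'I_n} | j \in J) nu J * ell_ratio J ^+ 2)%:E)%E.
Proof. by rewrite -sumEFin; apply: eq_bigr => J; apply: persp_mu_nu. Qed.

Definition decomp_x (J : {set 'I_n}) (s : 'I_n) : R :=
  if s == j then ell_ratio (j |: J) else (s \in J)%:R.

Lemma decomp_x_itv J s : 0 <= decomp_x J s <= 1.
Proof.
rewrite /decomp_x; case: eqP => _; first by rewrite ell_ratio_itv ?setU11.
by case: (s \in J); rewrite ?lexx ?ler01.
Qed.

Lemma mixture_decomp_x A :
  mixture (fun J => mu J) (fun J => prod_pt (decomp_x J)) A = z A.
Proof.
rewrite /mixture -(sum_ell_subset z A); have [jA | jA] := boolP (j \in A); last first.
  apply: eq_bigr => J _; congr (_ * _); rewrite -prod_pt_indicator.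
  by apply: eq_bigr => s sA; rewrite /decomp_x ifN //; apply: contraNneq jA => <-.
transitivity (\sum_(J : {set 'I_n}) mu J * (ell_ratio (j |: J) * (A \subset j |: J)%:R)).
  apply: eq_bigr => J _; congr (_ * _).
  rewrite /prod_pt (big_setD1 j jA) {1}/decomp_x eqxx -subDset -prod_pt_indicator.
  by congr (_ * _); apply: eq_bigr => s; rewrite !inE /decomp_x => /andP[/negbTE -> _].
rewrite (sum_ell_setU1 z j (fun K => ell_ratio K * (A \subset K)%:R)).
rewrite [RHS](bigID (fun K : {set 'I_n} => j \in K)) /=.
rewrite [X in _ = _ + X]big1 ?addr0 => [|K jK].
  by apply: eq_bigr => K jK; rewrite mulrA nu_mul_ratio.
by rewrite (contraNF (fun AK => subsetP AK j jA) jK) mulr0.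
Qed.

Variable y : 'I_n -> R.

Definition decomp_y (J : {set 'I_n}) (s : 'I_n) : R :=
  if s == j then
    ell_ratio (j |: J) ^+ 2
      + (y j - \sum_(K : {set 'I_n} | j \in K) nu K * ell_ratio K ^+ 2)
  else (s \in J)%:R + (y s - z [set s]).

Lemma mixture_decomp_y s : z set0 = 1 -> mixture (fun J => mu J) decomp_y s = y s.
Proof.
move=> z0; rewrite /mixture /decomp_y; case: eqP => [-> | _];
  under eq_bigr do rewrite mulrDr;
  rewrite big_split /= -mulr_suml sum_ell_compl z0 mul1r.
  by rewrite (sum_ell_setU1 z j (fun K => ell_ratio K ^+ 2)) addrC subrK.
under eq_bigr do rewrite -sub1set.
by rewrite sum_ell_subset addrC subrK.
Qed.

Lemma decomp_y_plus J :
  (\sum_(K : {set 'I_n} | j \in K) persp (mu K) (nu K) <= (y j)%:E)%E ->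
  decomp_x J j ^+ 2 <= decomp_y J j.
Proof.
by rewrite sum_persp_mu_nu lee_fin /decomp_x /decomp_y eqxx lerDl subr_ge0.
Qed.

Lemma decomp_y_minus J s : s != j -> y s <= z [set s] -> decomp_y J s <= decomp_x J s ^+ 2.
Proof.
move=> sj ys; rewrite /decomp_y /decomp_x (negbTE sj).
by case: (s \in J); rewrite /= ?expr1n ?expr0n /=; lra.
Qed.
End ExtendedPoints.

Lemma ext_proj_sub_QP (R : realFieldType) n (j : 'I_n) (Lm : {set 'I_n})
    (p : qcoord ([set j] :|: Lm) -> R) :
  j \notin Lm -> ext_proj j Lm p -> QP [set j] Lm p.
Proof.
move=> jLm [z [y [z0 [persp_le [ell_ge0 [yLm ->]]]]]].
apply: (@conv_hull_mixture _ _ _ _ (fun J => ell z J (~: J))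
  (fun J => proj_pt (prod_pt (decomp_x j z J)) (decomp_y j z y J))) => [J | | J | c].
- exact: ell_ge0.
- by rewrite sum_ell_compl.
- exists (decomp_x j z J), (decomp_y j z y J); split; [|split; [|split]] => //.
  + by move=> s; apply: decomp_x_itv.
  + by move=> s /set1P ->; apply: decomp_y_plus.
  + move=> s sLm; apply: decomp_y_minus; last by case: (yLm s sLm).
    by apply: contraNneq jLm => <-.
- rewrite proj_pt_mixture /proj_pt.
  by case: (val c) => [A|s]; rewrite ?mixture_decomp_x ?mixture_decomp_y.
Qed.

Theorem corollary3 (R : realType) (n : nat) (j : 'I_n) (Lm : {set 'I_n})
  (hj : j \notin Lm) (p : qcoord ([set j] :|: Lm) -> R) :
  QP [set j] Lm p <-> ext_proj j Lm p.
Proof. by split; [apply: QP_sub_ext_proj | apply: ext_proj_sub_QP]. Qed.
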